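(* Let $F$ be a functor on small types. Every $F$-coalgebra $(C,k_C)$ gives rise to an $F[\Box-]$-coalgebra $(TC,k_{TC})$ whose carrier is the constant family $TC:=\lambda i.\,C:\mathsf{Size}\to U$, and this extends to a functor $T$ from $F$-coalgebras to $F[\Box-]$-coalgebras.
   Context: Ambient theory: an intensional dependent type theory with $\Sigma,\Pi$, identity types, a Tarski-style universe $U$ of small types (decoding implicit), function extensionality; a non-small type $\mathsf{Size}$ with a small mere-proposition order $j<i$; for families of small types $A(i)$ over $\mathsf{Size}$ a small type $\forall i.A(i)$ with size-abstraction and application ($\beta,\eta$); $\forall j<i.A(j):=\forall j.(j<i)\to A(j)$ (inequality proof suppressed). A functor on small types: $F:U\to U$ with action $Ff:FA\to FB$ for $f:A\to B$, preserving identities and composition up to equality. An $F$-coalgebra is $(C,k_C)$, $k_C:C\to FC$; a morphism $(C,k_C)\to(D,k_D)$ is $h:C\to D$ with a path $k_D\circ h=Fh\circ k_C$. For $X:\mathsf{Size}\to U$, $\Box_iX:=\forall j<i.X\,j$; $X\overset{i}{\to}Y:=\forall i.X\,i\to Y\,i$; for $f:X\overset{i}{\to}Y$, $\Box f\,i\,g:=\lambda j.f\,j\,(g\,j)$. An $F[\Box-]$-coalgebra is $(X,k)$ with $k:\forall i.X\,i\to F(\Box_iX)$; a morphism $(X,k)\to(Y,l)$ is $h:X\overset{i}{\to}Y$ with a path $l\circ h=(\lambda i.F(\Box h\,i))\circ k$ pointwise. A functor between these collections of coalgebras is an assignment on coalgebras and morphisms preserving identities and composition up to propositional equality. *)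

(* Sized-type ambient theory modelled inside Rocq:
   the universe U of small types is Rocq's Type, ∀ i. A(i) is the Rocq
   dependent product, Size is an abstract type with a Prop-valued order. *)
From Stdlib Require Import FunctionalExtensionality.

Record Functor := {
  Fob : Type -> Type;
  Fmap : forall A B : Type, (A -> B) -> Fob A -> Fob B;
  Fmap_id : forall A : Type, Fmap A A (fun x => x) = (fun x => x);
  Fmap_comp : forall (A B C : Type) (f : A -> B) (g : B -> C),
      Fmap A C (fun x => g (f x)) = (fun y => Fmap B C g (Fmap A B f y))
}.
Arguments Fmap f {A B} _ _ : rename.

Record SizeStr := {
  Size : Type;
  slt : Size -> Size -> Prop;
  slt_prop : forall (j i : Size) (p q : slt j i), p = q
}.

Definition Box (S : SizeStr) (X : Size S -> Type) (i : Size S) : Type :=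
  forall j : Size S, slt S j i -> X j.

Definition Boxmap (S : SizeStr) (X Y : Size S -> Type)
  (f : forall i, X i -> Y i) (i : Size S) (g : Box S X i) : Box S Y i :=
  fun j p => f j (g j p).

Record Coalg (F : Functor) := { car : Type; str : car -> Fob F car }.
Arguments car {F} _.
Arguments str {F} _ _.

Record CMor (F : Functor) (C D : Coalg F) := {
  cmap : car C -> car D;
  cpath : (fun c => str D (cmap c)) = (fun c => Fmap F cmap (str C c))
}.
Arguments cmap {F C D} _ _.
Arguments cpath {F C D} _.

Definition cid (F : Functor) (C : Coalg F) : CMor F C C.
Proof.
  refine {| cmap := fun x => x |}.
  rewrite (Fmap_id F). reflexivity.
Defined.

Definition ccomp (F : Functor) (C D E : Coalg F)
  (g : CMor F D E) (h : CMor F C D) : CMor F C E.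
Proof.
  refine {| cmap := fun x => cmap g (cmap h x) |}.
  rewrite (Fmap_comp F).
  apply functional_extensionality; intro c.
  pose proof (f_equal (fun u => u (cmap h c)) (cpath g)) as Hg; simpl in Hg.
  pose proof (f_equal (fun u => u c) (cpath h)) as Hh; simpl in Hh.
  rewrite Hg, Hh. reflexivity.
Defined.

Record BCoalg (S : SizeStr) (F : Functor) := {
  bcar : Size S -> Type;
  bstr : forall i : Size S, bcar i -> Fob F (Box S bcar i)
}.
Arguments bcar {S F} _ _.
Arguments bstr {S F} _ _ _.

Record BMor (S : SizeStr) (F : Functor) (X Y : BCoalg S F) := {
  bmap : forall i : Size S, bcar X i -> bcar Y i;
  bpath : forall i : Size S,
      (fun x => bstr Y i (bmap i x))
      = (fun x => Fmap F (Boxmap S (bcar X) (bcar Y) bmap i) (bstr X i x))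
}.
Arguments bmap {S F X Y} _ _ _.
Arguments bpath {S F X Y} _ _.

Definition bid (S : SizeStr) (F : Functor) (X : BCoalg S F) : BMor S F X X.
Proof.
  refine {| bmap := fun i x => x |}.
  intro i. unfold Boxmap. rewrite (Fmap_id F). reflexivity.
Defined.

Definition bcomp (S : SizeStr) (F : Functor) (X Y Z : BCoalg S F)
  (g : BMor S F Y Z) (h : BMor S F X Y) : BMor S F X Z.
Proof.
  refine {| bmap := fun i x => bmap g i (bmap h i x) |}.
  intro i. unfold Boxmap.
  change (fun (g0 : Box S (bcar X) i) (j : Size S) (p : slt S j i) =>
            bmap g j (bmap h j (g0 j p)))
    with (fun g0 => Boxmap S (bcar Y) (bcar Z) (bmap g) i
                     (Boxmap S (bcar X) (bcar Y) (bmap h) i g0)).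
  rewrite (Fmap_comp F).
  apply functional_extensionality; intro c.
  pose proof (f_equal (fun u => u (bmap h i c)) (bpath g i)) as Hg; simpl in Hg.
  pose proof (f_equal (fun u => u c) (bpath h i)) as Hh; simpl in Hh.
  rewrite Hg, Hh. reflexivity.
Defined.

Definition TC (S : SizeStr) (F : Functor) (C : Coalg F) : BCoalg S F :=
  {| bcar := fun _ => car C;
     bstr := fun i c =>
       Fmap F (fun (c' : car C) => (fun j _ => c') : Box S (fun _ => car C) i)
            (str C c) |}.

From Stdlib Require Import FunctionalExtensionality ProofIrrelevance.

(* The constant family TC turns every box [Box (λ _. C) i] into constant
   functions, and boxing [λ _. h] merely postcomposes them with [h]; so the
   square for [λ _. h] is the square for [h] followed by functoriality.
   Morphisms with equal underlying maps are equal (their paths are identified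
   by proof irrelevance), and on underlying maps T preserves identities and
   composition definitionally. *)

Lemma Fmap_compE (F : Functor) (A B C : Type) (f : A -> B) (g : B -> C) (x : Fob F A) :
  Fmap F (fun a => g (f a)) x = Fmap F g (Fmap F f x).
Proof. exact (f_equal (fun u => u x) (Fmap_comp F A B C f g)). Qed.

Lemma cpathE (F : Functor) (C D : Coalg F) (h : CMor F C D) (c : car C) :
  str D (cmap h c) = Fmap F (cmap h) (str C c).
Proof. exact (f_equal (fun u => u c) (cpath h)). Qed.

Lemma BMor_ext (S : SizeStr) (F : Functor) (X Y : BCoalg S F) (f g : BMor S F X Y) :
  bmap f = bmap g -> f = g.
Proof.
  destruct f as [f pf], g as [g pg]; simpl; intros ->.
  f_equal; apply proof_irrelevance.
Qed.

Lemma TC_bpath (S : SizeStr) (F : Functor) (C D : Coalg F) (h : CMor F C D) (i : Size S) :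
  (fun x => bstr (TC S F D) i (cmap h x))
  = (fun x => Fmap F (Boxmap S (bcar (TC S F C)) (bcar (TC S F D)) (fun _ => cmap h) i)
                     (bstr (TC S F C) i x)).
Proof.
  apply functional_extensionality; intro x; simpl.
  rewrite cpathE, <- !Fmap_compE.
  reflexivity.
Qed.

Definition Tmap (S : SizeStr) (F : Functor) (C D : Coalg F) (h : CMor F C D) :
  BMor S F (TC S F C) (TC S F D) :=
  {| bmap := (fun _ => cmap h) : forall i, bcar (TC S F C) i -> bcar (TC S F D) i;
     bpath := TC_bpath S F C D h |}.

Lemma Tmap_id (S : SizeStr) (F : Functor) (C : Coalg F) :
  Tmap S F C C (cid F C) = bid S F (TC S F C).
Proof. apply BMor_ext; reflexivity. Qed.

Lemma Tmap_comp (S : SizeStr) (F : Functor) (C D E : Coalg F)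
  (g : CMor F D E) (h : CMor F C D) :
  Tmap S F C E (ccomp F C D E g h)
  = bcomp S F (TC S F C) (TC S F D) (TC S F E) (Tmap S F D E g) (Tmap S F C D h).
Proof. apply BMor_ext; reflexivity. Qed.

Theorem lemmaB3 (S : SizeStr) (F : Functor) :
  exists Tmor : forall C D : Coalg F, CMor F C D -> BMor S F (TC S F C) (TC S F D),
    (forall (C D : Coalg F) (h : CMor F C D) (i : Size S),
        bmap (Tmor C D h) i = cmap h)
    /\ (forall C : Coalg F, Tmor C C (cid F C) = bid S F (TC S F C))
    /\ (forall (C D E : Coalg F) (g : CMor F D E) (h : CMor F C D),
          Tmor C E (ccomp F C D E g h)
          = bcomp S F (TC S F C) (TC S F D) (TC S F E) (Tmor D E g) (Tmor C D h)).
Proof.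
  exists (Tmap S F).
  split; [| split].
  - reflexivity.
  - exact (Tmap_id S F).
  - exact (Tmap_comp S F).
Qed.
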